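(* Let $\alpha\in(0,1/2)$ be irrational and let $q_k$ ($k\ge0$) be a denominator of a convergent of $\alpha$. Then there exists a factor of slope $\alpha$ whose minimum abelian period equals $q_k$.
   Context: Write $\alpha=[0;a_1,a_2,\ldots]$ with positive integers $a_i$ (so $a_1\ge2$); $q_{-1}=0$, $q_0=1$, $q_1=a_1$, $q_k=a_kq_{k-1}+q_{k-2}$ for $k\ge2$. Sturmian words: identify the circle $\mathbb{T}$ with $[0,1)$, let $R(\rho)=\{\rho+\alpha\}$, and fix one of the conventions $I_0=[0,1-\alpha)$, $I_1=[1-\alpha,1)$ or $I_0=(0,1-\alpha]$, $I_1=(1-\alpha,1]$. The Sturmian word $\mathbf{s}_{\rho,\alpha}$ has $n$-th letter $0$ if $R^n(\rho)\in I_0$ and $1$ otherwise. All these words have the same set $\mathcal{L}_\alpha$ of finite factors, the factors of slope $\alpha$. Abelian periods: the Parikh vector of a binary word $u$ is $(|u|_0,|u|_1)$; $P$ is contained in $Q$ if $P\le Q$ componentwise and $P\ne Q$. An abelian decomposition of $w$ is $w=u_0u_1\cdots u_{n-1}u_n$, $n\ge2$, with $u_1,\dots,u_{n-1}$ having a common Parikh vector $P$ and the Parikh vectors of $u_0,u_n$ contained in $P$; the common length of $u_1,\ldots,u_{n-1}$ is an abelian period; the minimum abelian period is the least one. *)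

From Stdlib Require Import Reals ZArith.
From mathcomp Require Import all_boot.

Set Implicit Arguments.
Unset Strict Implicit.
Unset Printing Implicit Defensive.

Fixpoint cf_rem (alpha : R) (n : nat) : R :=
  match n with
  | 0 => alpha
  | n'.+1 => frac_part (/ cf_rem alpha n')
  end.

Definition cf_a (alpha : R) (n : nat) : nat :=
  match n with
  | 0 => 0
  | n'.+1 => Z.to_nat (Int_part (/ cf_rem alpha n'))
  end.

(* cf_qpair alpha k = (q_{k-1}, q_k), with q_{-1} = 0, q_0 = 1,
   q_k = a_k q_{k-1} + q_{k-2}  (so q_1 = a_1). *)
Fixpoint cf_qpair (alpha : R) (k : nat) : nat * nat :=
  match k with
  | 0 => (0, 1)
  | k'.+1 => let p := cf_qpair alpha k' in
             (p.2, cf_a alpha k * p.2 + p.1)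
  end.

Definition cf_q (alpha : R) (k : nat) : nat := (cf_qpair alpha k).2.

(* Letters: false = 0, true = 1.  R^n(rho) = {rho + n alpha}.
   Convention c = true  : I_0 = [0, 1 - alpha), I_1 = [1 - alpha, 1).
   Convention c = false : I_0 = (0, 1 - alpha], I_1 = (1 - alpha, 1]
   (the point 0 of [0,1) is the point 1 of the circle, in I_1). *)
Definition sturmian (c : bool) (rho alpha : R) (n : nat) : bool :=
  let x := frac_part (rho + INR n * alpha) in
  if c then
    (if Rlt_dec x (1 - alpha) then false else true)
  else
    (if Rlt_dec 0 x then (if Rle_dec x (1 - alpha) then false else true)
     else true).

Definition factor_of_slope (alpha : R) (w : seq bool) : Prop :=
  exists (c : bool) (rho : R) (i : nat),
    Rle 0 rho /\ Rlt rho 1 /\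
    w = mkseq (fun j => sturmian c rho alpha (i + j)) (size w).

Definition parikh (u : seq bool) : nat * nat :=
  (count negb u, count id u).

Definition parikh_contained (P Q : nat * nat) : Prop :=
  P.1 <= Q.1 /\ P.2 <= Q.2 /\ P <> Q.

(* p is an abelian period of w: w = u_0 u_1 ... u_{n-1} u_n, n >= 2,
   u_1..u_{n-1} (the list us, nonempty) share Parikh vector P, the Parikh
   vectors of u_0 and u_n are contained in P, and p = |u_1|. *)
Definition abelian_period (w : seq bool) (p : nat) : Prop :=
  exists (u0 : seq bool) (us : seq (seq bool)) (un : seq bool) (P : nat * nat),
    us <> [::] /\
    w = u0 ++ flatten us ++ un /\
    (forall u, u \in us -> parikh u = P) /\
    parikh_contained (parikh u0) P /\
    parikh_contained (parikh un) P /\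
    p = P.1 + P.2.

Definition min_abelian_period (w : seq bool) (p : nat) : Prop :=
  abelian_period w p /\ forall p', abelian_period w p' -> p <= p'.

Definition irrational (x : R) : Prop :=
  forall (m n : Z), n <> 0%Z -> x <> Rdiv (IZR m) (IZR n).

(* Let n = q_k and N = q_(k+1) (k >= 1).  Since N |n alpha - p_k| < 1, a suitable
   intercept rho makes each of the first N blocks of length n of the mechanical word
   s_(rho,alpha) contain exactly p_k ones; removing the first and the last letter of
   these N blocks leaves a factor of length N n - 2 with abelian period n.
   Conversely, an abelian period m of a factor of length L yields M consecutive
   blocks of length m with a common number d of ones and M m >= L + 2 - 2 m, so
   M |m alpha - d| < 1.  For 0 < m < q_k this contradicts the best-approximation
   bound m <= |m alpha - d| (q_(k+1) q_k - 2 m), obtained by writing (m, d) in the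
   unimodular basis (q_k, p_k), (q_(k-1), p_(k-1)) and comparing the signs of the
   two coordinates.  For k = 0 a single letter does the job. *)

From Stdlib Require Import Reals ZArith Lra Lia Psatz.
From mathcomp Require Import all_boot zify.

Set Implicit Arguments.
Unset Strict Implicit.
Unset Printing Implicit Defensive.

Lemma count_negb_id (u : seq bool) : count negb u + count id u = size u.
Proof. by rewrite addnC; exact: count_predC. Qed.

Lemma parikh_flatten (us : seq (seq bool)) (P : nat * nat) :
  (forall u, u \in us -> parikh u = P) ->
  parikh (flatten us) = (size us * P.1, size us * P.2).
Proof.
case: P => P0 P1; elim: us => [|u us IH] us_P //=.
have := us_P u (mem_head u us); rewrite /parikh => -[u0 u1].
have := IH (fun v v_us => us_P v (mem_behead (s := u :: us) v_us)); rewrite /parikh => -[us0 us1].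
by rewrite !count_cat u0 u1 us0 us1 !mulSn.
Qed.

Lemma parikh_contained_size (u : seq bool) (P : nat * nat) :
  parikh_contained (parikh u) P -> size u < P.1 + P.2.
Proof.
case: P => P0 P1 [/= le0 [le1 neq]]; rewrite -count_negb_id /=.
by rewrite ltn_neqAle leq_add // andbT; apply/eqP => e; apply: neq; congr pair; lia.
Qed.

Lemma parikh_containedP (u : seq bool) (P : nat * nat) :
  count negb u <= P.1 -> count id u <= P.2 -> size u < P.1 + P.2 ->
  parikh_contained (parikh u) P.
Proof.
move=> le0 le1 lt_size; split=> //; split=> // e.
by move: lt_size; rewrite -count_negb_id -e ltnn.
Qed.

Lemma parikh_contained_trimmed_block (u : seq bool) (n P : nat) :
  0 < n -> P <= n -> size u = n.-1 -> P <= (count id u).+1 -> count id u <= P ->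
  parikh_contained (parikh u) (n - P, P).
Proof.
move=> n_gt0 P_le size_u lo hi; apply: parikh_containedP => /=; [|by []|lia].
by have := count_negb_id u; lia.
Qed.

Lemma abelian_period_gt0 (w : seq bool) (p : nat) : abelian_period w p -> 0 < p.
Proof.
by move=> [u0 [_ [_ [P [_ [_ [_ [/parikh_contained_size u0_P [_ ->]]]]]]]]]; lia.
Qed.

Lemma abelian_period_window (w : seq bool) (p : nat) : abelian_period w p ->
  exists t M d, t + M * p <= size w /\ size w <= M * p + 2 * (p - 1) /\
    count id (take (M * p) (drop t w)) = M * d.
Proof.
move=> [u0 [us [un [P [_ [-> [us_P [u0_P [un_P ->]]]]]]]]].
have := parikh_flatten us_P; rewrite /parikh => -[cnt0 cnt1].
have size_us : size (flatten us) = size us * (P.1 + P.2).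
  by rewrite -count_negb_id cnt0 cnt1 mulnDr.
have := parikh_contained_size u0_P; have := parikh_contained_size un_P.
exists (size u0), (size us), P.2.
rewrite drop_size_cat // take_size_cat // !size_cat size_us; split; [lia | split; [lia | by []]].
Qed.

Lemma min_abelian_period_singleton (b : bool) : min_abelian_period [:: b] 1.
Proof.
split; last by move=> p /abelian_period_gt0.
exists [::], [:: [:: b]], [::], (parikh [:: b]).
do 2!split=> //; split; first by move=> u; rewrite inE => /eqP ->.
by case: b; do 2!split=> //.
Qed.

Local Open Scope R_scope.

Lemma INR_addn m n : INR (m + n) = INR m + INR n.
Proof. by rewrite -plusE plus_INR. Qed.

Lemma INR_muln m n : INR (m * n) = INR m * INR n.
Proof. by rewrite -multE mult_INR. Qed.

Lemma INR_leq m n : (m <= n)%N -> INR m <= INR n.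
Proof. by move/leP; apply: le_INR. Qed.

Lemma Int_part_addr_dist x y : Rabs (y - IZR (Int_part (x + y) - Int_part x)) < 1.
Proof.
have [lx ux] := base_Int_part x; have [lxy uxy] := base_Int_part (x + y).
by rewrite minus_IZR; apply: Rabs_def1; lra.
Qed.

Lemma lattice_coeff_signs (m n p U V : Z) :
  (1 <= m < n)%Z -> (0 < p < n)%Z -> p = (U * m + V * n)%Z ->
  (1 <= U /\ V <= 0)%Z \/ (U <= -1 /\ 1 <= V)%Z.
Proof.
move=> hmn hp p_eq; rewrite p_eq in hp.
case: (Z.lt_total U 0) => [hU|[hU|hU]].
- right; split; first lia.
  by case: (Z.le_gt_cases V 0) => hV //; nia.
- by subst U; case: (Z.le_gt_cases V 0) => hV; nia.
- by left; split; [lia | nia].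
Qed.

(* (n, pn) and (m, pm) play the consecutive convergents (q_k, p_k) and (q_(k-1), p_(k-1)),
   b and c the errors |q_k alpha - p_k| and |q_(k-1) alpha - p_(k-1)|. *)
Section BestApproximation.

Variables (alpha b c s : R) (n m pn pm : Z).
Hypothesis s_unit : Rabs s = 1.
Hypothesis n_error : IZR n * alpha - IZR pn = s * b.
Hypothesis m_error : IZR m * alpha - IZR pm = - s * c.
Hypothesis n_c_m_b : IZR n * c + IZR m * b = 1.
Hypothesis b_gt0 : 0 < b.
Hypothesis b_lt_c : b < c.
Hypothesis m_ge1 : (1 <= m)%Z.
Hypothesis m_lt_n : (m < n)%Z.

Lemma convergent_det_unit : ((n * pm - m * pn) * (n * pm - m * pn) = 1)%Z.
Proof.
apply: eq_IZR; rewrite mult_IZR minus_IZR !mult_IZR.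
have -> : IZR n * IZR pm - IZR m * IZR pn = s.
  transitivity (IZR m * (IZR n * alpha - IZR pn) - IZR n * (IZR m * alpha - IZR pm)); first ring.
  rewrite n_error m_error.
  by transitivity (s * (IZR n * c + IZR m * b)); [ring | rewrite n_c_m_b; ring].
have := Rsqr_abs s; rewrite s_unit /Rsqr; lra.
Qed.

Lemma approx_error_decomp (p d : Z) :
  exists U V : Z, p = (U * m + V * n)%Z /\
    Rabs (IZR p * alpha - IZR d) = Rabs (IZR V * b - IZR U * c).
Proof.
set D := (n * pm - m * pn)%Z.
have DD : (D * D = 1)%Z := convergent_det_unit.
exists (D * (n * d - p * pn))%Z, (D * (pm * p - m * d))%Z.
set U := (D * _)%Z; set V := (D * _)%Z.
have p_eq : p = (U * m + V * n)%Z.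
  by transitivity (p * (D * D))%Z; [rewrite DD; ring | rewrite /U /V /D; ring].
have d_eq : d = (U * pm + V * pn)%Z.
  by transitivity (d * (D * D))%Z; [rewrite DD; ring | rewrite /U /V /D; ring].
clearbody U V; split=> //; rewrite p_eq d_eq !plus_IZR !mult_IZR.
transitivity (Rabs (IZR U * (IZR m * alpha - IZR pm) + IZR V * (IZR n * alpha - IZR pn))).
  by f_equal; ring.
rewrite m_error n_error.
have -> : IZR U * (- s * c) + IZR V * (s * b) = s * (IZR V * b - IZR U * c) by ring.
by rewrite Rabs_mult s_unit Rmult_1_l.
Qed.

Lemma approx_error_lower_bound (N p d : Z) :
  (n + m <= N)%Z -> (1 <= p < n)%Z ->
  IZR p <= Rabs (IZR p * alpha - IZR d) * (IZR N * IZR n - 2 * IZR p).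
Proof.
move=> hN hp.
have [U [V [p_eq ->]]] := approx_error_decomp p d.
have hpR : IZR p = IZR U * IZR m + IZR V * IZR n by rewrite p_eq plus_IZR !mult_IZR.
have Hnp : IZR p + 1 <= IZR n by rewrite -plus_IZR; apply: IZR_le; lia.
have Hm1 : 1 <= IZR m by apply: IZR_le.
have Hmn : IZR m + 1 <= IZR n by rewrite -plus_IZR; apply: IZR_le; lia.
have HN : IZR n + IZR m <= IZR N by rewrite -plus_IZR; apply: IZR_le.
have Hp1 : 1 <= IZR p by apply: IZR_le; lia.
set X := IZR N * IZR n - 2 * IZR p.
case: (lattice_coeff_signs (conj m_ge1 m_lt_n) (ltac:(lia) : (0 < p < n)%Z) p_eq)
  => [[hU hV]|[hU hV]].
- have {}hU : 1 <= IZR U by apply: IZR_le.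
  have {}hV : IZR V <= 0 by apply: IZR_le.
  rewrite Rabs_left; last nra.
  (* [c (n + m) > n c + m b = 1], and [X >= m (n + m)] *)
  have c_nm : 1 < c * (IZR n + IZR m) by nra.
  have hX : IZR m * (IZR n + IZR m) <= X by rewrite /X; nra.
  have m_le : IZR m <= c * X by nra.
  have X_gt0 : 0 < X by nra.
  have p_le : IZR p <= IZR U * (c * X) by rewrite hpR; nra.
  have : 0 <= (- IZR V * b) * X by apply: Rmult_le_pos; nra.
  lra.
- have {}hU : IZR U <= -1 by apply: IZR_le.
  have {}hV : 1 <= IZR V by apply: IZR_le.
  (* here [n (V b - U c) = - U + b p >= 1] and [X >= n p] *)
  have n_err : IZR n * (IZR V * b - IZR U * c) = - IZR U + b * IZR p.
    by rewrite hpR; have := n_c_m_b; nra.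
  have hX : IZR n * IZR p <= X by rewrite /X; nra.
  have nE_ge1 : 1 <= IZR n * (IZR V * b - IZR U * c) by rewrite n_err; nra.
  have X_gt0 : 0 < X by nra.
  have X_le : X <= IZR n * (IZR V * b - IZR U * c) * X.
    have : 0 <= (IZR n * (IZR V * b - IZR U * c) - 1) * X by apply: Rmult_le_pos; lra.
    lra.
  rewrite Rabs_right; last nra.
  apply: (Rmult_le_reg_l (IZR n)); lra.
Qed.

End BestApproximation.

Lemma irrational_neq0 x : irrational x -> x <> 0.
Proof. by move=> irr_x x0; apply: (irr_x 0%Z 1%Z) => //; rewrite x0 /Rdiv Rmult_0_l. Qed.

Lemma irrational_frac_part_inv x : irrational x -> irrational (frac_part (/ x)).
Proof.
move=> irr_x a b b0 e.
have x0 := irrational_neq0 irr_x.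
set z := Int_part (/ x).
have inv_x : / x = IZR (z * b + a) / IZR b.
  have a_eq : IZR a = (/ x - IZR z) * IZR b.
    by rewrite -[_ - _]/(frac_part _) e; field; exact: not_0_IZR.
  by rewrite plus_IZR mult_IZR a_eq; field; split=> //; exact: not_0_IZR.
have zba0 : (z * b + a)%Z <> 0%Z.
  by move=> h; rewrite h /Rdiv Rmult_0_l in inv_x; apply: (Rinv_neq_0_compat x).
apply: (irr_x b (z * b + a)%Z zba0).
rewrite -(Rinv_inv x) inv_x; field; split; exact: not_0_IZR.
Qed.

(* cf_ppair alpha k = (p_(k-1), p_k), the numerators of the convergents. *)
Fixpoint cf_ppair (alpha : R) (k : nat) : nat * nat :=
  match k with
  | 0 => (1, 0)%N
  | k'.+1 => let p := cf_ppair alpha k' in (p.2, cf_a alpha k * p.2 + p.1)%N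
  end.

Definition cf_p (alpha : R) (k : nat) : nat := (cf_ppair alpha k).2.

Fixpoint cf_beta (alpha : R) (k : nat) : R :=
  match k with 0 => 1 | k'.+1 => cf_beta alpha k' * cf_rem alpha k' end.

Section ContinuedFraction.

Variable alpha : R.
Hypothesis alpha_gt0 : 0 < alpha.
Hypothesis alpha_lt_half : alpha < 1 / 2.
Hypothesis alpha_irr : irrational alpha.

Local Notation x := (cf_rem alpha).
Local Notation a := (cf_a alpha).
Local Notation q := (cf_q alpha).
Local Notation p := (cf_p alpha).
Local Notation beta := (cf_beta alpha).

Lemma cf_qSS k : q k.+2 = (a k.+2 * q k.+1 + q k)%N.
Proof. by []. Qed.

Lemma cf_pSS k : p k.+2 = (a k.+2 * p k.+1 + p k)%N.
Proof. by []. Qed.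

Lemma cf_q0 : q 0 = 1%N.
Proof. by []. Qed.

Lemma cf_q1 : q 1 = a 1.
Proof. by rewrite /cf_q /= muln1 addn0. Qed.

Lemma cf_p0 : p 0 = 0%N.
Proof. by []. Qed.

Lemma cf_p1 : p 1 = 1%N.
Proof. by rewrite /cf_p /= muln0. Qed.

Lemma cf_rem_irrational n : irrational (x n).
Proof. by elim: n => [|n IH] //=; apply: irrational_frac_part_inv. Qed.

Lemma cf_rem_gt0 n : 0 < x n.
Proof.
case: n => [//|n] /=.
have [fp_ge0 _] := base_fp (/ x n).
have := irrational_neq0 (@cf_rem_irrational n.+1); rewrite /=; lra.
Qed.

Lemma cf_rem_lt1 n : x n < 1.
Proof. by case: n => [|n] /=; [lra | case: (base_fp (/ x n))]. Qed.

Lemma cf_a_INR n : INR (a n.+1) = / x n - x n.+1.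
Proof.
have x_gt0 := cf_rem_gt0 n.
rewrite /= /frac_part INR_IZR_INZ Z2Nat.id; first lra.
have [_ fl_gt] := base_Int_part (/ x n).
have : IZR (-1) < IZR (Int_part (/ x n)).
  have := Rinv_0_lt_compat _ x_gt0; rewrite /=; lra.
by move/lt_IZR; lia.
Qed.

Lemma cf_a_gt0 n : (0 < a n.+1)%N.
Proof.
have inv_gt1 : 1 < / x n.
  by rewrite -Rinv_1; apply: Rinv_lt_contravar; have := cf_rem_gt0 n; have := cf_rem_lt1 n; nra.
have : INR 0 < INR (a n.+1).
  by rewrite cf_a_INR; change (INR 0) with 0; have := cf_rem_lt1 n.+1; lra.
by move/INR_lt/ltP.
Qed.

Lemma cf_a1_ge2 : (2 <= a 1)%N.
Proof.
have inv_gt2 : 2 < / alpha.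
  by rewrite -[2]Rinv_inv; apply: Rinv_lt_contravar; lra.
have : INR 1 < INR (a 1).
  by rewrite cf_a_INR; change (INR 1) with 1; change (x 0) with alpha; have := cf_rem_lt1 1; lra.
by move/INR_lt/ltP.
Qed.

Lemma cf_q_gt0 k : (0 < q k)%N.
Proof.
elim/ltn_ind: k => -[|[|k]] IH //; first by rewrite cf_q1; have := cf_a1_ge2; lia.
by rewrite cf_qSS; have := IH k (leqnSn _); lia.
Qed.

Lemma cf_q_addSS k : (q k.+1 + q k <= q k.+2)%N.
Proof. by rewrite cf_qSS; have := cf_a_gt0 k.+1; nia. Qed.

Lemma cf_q_ltS k : (q k < q k.+1)%N.
Proof.
case: k => [|k]; first by rewrite cf_q0 cf_q1; have := cf_a1_ge2; lia.
by have := cf_q_addSS k; have := cf_q_gt0 k; lia.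
Qed.

Lemma cf_q_ge3 k : (3 <= q k.+2)%N.
Proof. by have := cf_q_addSS k; have := cf_q_gt0 k; have := cf_q_ltS k; lia. Qed.

Lemma cf_betaS k : beta k.+1 = beta k * x k.
Proof. by []. Qed.

Lemma cf_beta_gt0 k : 0 < beta k.
Proof. by elim: k => [|k IH]; [apply: Rlt_0_1 | rewrite cf_betaS; have := cf_rem_gt0 k; nra]. Qed.

Lemma cf_beta_ltS k : beta k.+1 < beta k.
Proof. by rewrite cf_betaS; have := cf_beta_gt0 k; have := cf_rem_lt1 k; nra. Qed.

Lemma cf_betaSS_ratio k : beta k.+2 * (INR (a k.+2) + x k.+2) = beta k.+1.
Proof. by rewrite cf_a_INR cf_betaS; field; have := cf_rem_gt0 k.+1; lra. Qed.

Lemma cf_error k : INR (q k) * alpha - INR (p k) = (-1) ^ k * beta k.+1.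
Proof.
suff : INR (q k) * alpha - INR (p k) = (-1) ^ k * beta k.+1 /\
       INR (q k.+1) * alpha - INR (p k.+1) = (-1) ^ k.+1 * beta k.+2 by case.
elim: k => [|k [IH IHS]].
  rewrite cf_q0 cf_q1 cf_p0 cf_p1 !cf_betaS cf_a_INR.
  change (x 0) with alpha; change (beta 0) with 1; change (INR 1) with 1; change (INR 0) with 0.
  by split; [|field]; lra.
split=> //; rewrite cf_qSS cf_pSS !INR_addn !INR_muln.
transitivity (INR (a k.+2) * (INR (q k.+1) * alpha - INR (p k.+1)) +
              (INR (q k) * alpha - INR (p k))); first ring.
by rewrite IHS IH -(cf_betaSS_ratio k) (cf_betaS k.+2) /=; ring.
Qed.

Lemma cf_q_beta k : INR (q k.+1) * beta k.+1 + INR (q k) * beta k.+2 = 1.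
Proof.
elim: k => [|k IH].
  rewrite cf_q0 cf_q1 !cf_betaS cf_a_INR.
  change (x 0) with alpha; change (beta 0) with 1; change (INR 1) with 1.
  by field; lra.
by rewrite cf_qSS INR_addn INR_muln -[RHS]IH -(cf_betaSS_ratio k) (cf_betaS k.+2); ring.
Qed.

Lemma cf_best_approx k (n d : nat) : (0 < n < q k.+1)%N ->
  INR n <= Rabs (INR n * alpha - INR d) * (INR (q k.+2) * INR (q k.+1) - 2 * INR n).
Proof.
move=> /andP [n_gt0 n_lt]; rewrite !INR_IZR_INZ.
apply: (@approx_error_lower_bound _ (beta k.+2) (beta k.+1) ((-1) ^ k.+1) _ (Z.of_nat (q k))
          (Z.of_nat (p k.+1)) (Z.of_nat (p k))); rewrite -?INR_IZR_INZ.
- exact: pow_1_abs.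
- exact: cf_error.
- by rewrite cf_error /=; ring.
- exact: cf_q_beta.
- exact: cf_beta_gt0.
- exact: cf_beta_ltS.
- by have := cf_q_gt0 k; lia.
- by have := cf_q_ltS k; lia.
- by have := cf_q_addSS k; lia.
- lia.
Qed.

Lemma cf_approx_lt1 k : INR (q k.+1) * Rabs (INR (q k) * alpha - INR (p k)) < 1.
Proof.
rewrite cf_error Rabs_mult pow_1_abs Rmult_1_l Rabs_pos_eq; last exact/Rlt_le/cf_beta_gt0.
have := cf_q_beta k; have := cf_beta_gt0 k.+2; have := pos_INR (q k).
have : 0 < INR (q k) by apply: lt_0_INR; apply/ltP; exact: cf_q_gt0.
nra.
Qed.

End ContinuedFraction.

Definition mech_floor (rho alpha : R) (i : nat) : Z := Int_part (rho + INR i * alpha).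

Definition sturm_factor (rho alpha : R) (i l : nat) : seq bool :=
  [seq sturmian true rho alpha j | j <- iota i l].

Lemma factor_of_slope_sturm_factor rho alpha i l :
  0 <= rho < 1 -> factor_of_slope alpha (sturm_factor rho alpha i l).
Proof.
move=> [rho_ge0 rho_lt1]; exists true, rho, i; do 2!split=> //.
by rewrite size_map size_iota /mkseq /sturm_factor -[in iota i l](addn0 i) iotaDl -map_comp.
Qed.

Lemma size_sturm_factor rho alpha i l : size (sturm_factor rho alpha i l) = l.
Proof. by rewrite size_map size_iota. Qed.

Lemma sturm_factor_cat rho alpha i l1 l2 :
  sturm_factor rho alpha i (l1 + l2) =
  sturm_factor rho alpha i l1 ++ sturm_factor rho alpha (i + l1) l2.
Proof. by rewrite /sturm_factor iotaD map_cat. Qed.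

Lemma take_drop_sturm_factor rho alpha i l t l' : (t + l' <= l)%N ->
  take l' (drop t (sturm_factor rho alpha i l)) = sturm_factor rho alpha (i + t) l'.
Proof.
move=> le_l; rewrite /sturm_factor -map_drop -map_take drop_iota take_iota.
by rewrite (minn_idPl _) //; lia.
Qed.

Section Mechanical.

Variables rho alpha : R.
Hypothesis alpha_ge0 : 0 <= alpha.
Hypothesis alpha_lt1 : alpha < 1.

Local Notation F := (mech_floor rho alpha).
Local Notation W := (sturm_factor rho alpha).

Lemma sturmian_true_floor i : Z.of_nat (sturmian true rho alpha i) = (F i.+1 - F i)%Z.
Proof.
rewrite /sturmian /mech_floor S_INR.
set y := rho + INR i * alpha.
have -> : rho + (INR i + 1) * alpha = y + alpha by rewrite /y; ring.
have [ly uy] := base_Int_part y.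
rewrite /frac_part; case: Rlt_dec => h /=.
  by rewrite -(@Int_part_spec (y + alpha) (Int_part y)); [lia | lra].
rewrite -(@Int_part_spec (y + alpha) (Int_part y + 1)); first lia.
by rewrite plus_IZR; lra.
Qed.

Lemma count_sturm_factor i l : Z.of_nat (count id (W i l)) = (F (i + l) - F i)%Z.
Proof.
elim: l i => [|l IH] i; first by rewrite addn0 /=; lia.
rewrite /sturm_factor /= -/(W i.+1 l) Nat2Z.inj_add IH sturmian_true_floor addSnnS; lia.
Qed.

Lemma abelian_period_sturm_factor i L p : abelian_period (W i L) p ->
  exists d : nat, Rabs (INR p * alpha - INR d) * (INR (L + 2) - 2 * INR p) < INR p.
Proof.
move=> /[dup] /abelian_period_gt0 p_gt0 /abelian_period_window [t [M [d [fits [covers cnt]]]]].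
rewrite size_sturm_factor in fits covers; rewrite take_drop_sturm_factor // in cnt.
exists d; set g := Rabs _.
have Mg_lt1 : INR M * g < 1.
  have := Int_part_addr_dist (rho + INR (i + t) * alpha) (INR M * INR p * alpha).
  have -> : rho + INR (i + t) * alpha + INR M * INR p * alpha =
            rho + INR (i + t + M * p) * alpha by rewrite !INR_addn INR_muln; ring.
  rewrite -[Int_part (rho + INR (i + t + _) * _)]/(F _) -[Int_part _]/(F _).
  rewrite -count_sturm_factor cnt -INR_IZR_INZ INR_muln.
  have -> : INR M * INR p * alpha - INR M * INR d = INR M * (INR p * alpha - INR d) by ring.
  by rewrite Rabs_mult Rabs_pos_eq //; apply: pos_INR.
have L_le : INR (L + 2) - 2 * INR p <= INR M * INR p.
  have : (L.+2 <= M * p + p + p)%N by lia.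
  by move/INR_leq; rewrite addn2 !S_INR !INR_addn INR_muln; lra.
have g_ge0 : 0 <= g := Rabs_pos _.
have p_ge1 : 1 <= INR p by apply: (INR_leq p_gt0).
have : g * (INR (L + 2) - 2 * INR p) <= g * (INR M * INR p) by apply: Rmult_le_compat_l.
nra.
Qed.

Lemma mech_floor_step i : (F i <= F i.+1 <= F i + 1)%Z.
Proof. by have := sturmian_true_floor i; case: sturmian => /=; lia. Qed.

Lemma flatten_sturm_factor_blocks n k M :
  flatten [seq W (j * n) n | j <- iota k M] = W (k * n) (M * n).
Proof.
elim: M k => [|M IH] k //=.
by rewrite IH [in RHS]mulSn sturm_factor_cat -mulSnr.
Qed.

Lemma abelian_period_uniform_blocks n P N :
  (0 < n)%N -> (3 <= N)%N -> (forall j, (j <= N)%N -> F (j * n) = Z.of_nat (j * P)) ->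
  abelian_period (W 1 (N * n - 2)) n.
Proof.
move=> n_gt0 N_ge3 F_blocks.
have F0 : F 0 = 0%Z by have := F_blocks 0%N (leq0n N).
have block_count j : (j < N)%N -> count id (W (j * n) n) = P.
  move=> lt_jN; have := count_sturm_factor (j * n) n.
  by rewrite -mulSnr !F_blocks //; [lia | exact: ltnW].
have P_le_n : (P <= n)%N.
  by have := count_size id (W (0 * n) n); rewrite size_sturm_factor block_count //; lia.
exists (W 1 n.-1), [seq W (j * n) n | j <- iota 1 (N - 2)], (W ((N - 1) * n) n.-1), ((n - P)%N, P).
split; first by case: (N - 2)%N (ltac:(lia) : (0 < N - 2)%N).
split.
  have -> : (N * n - 2 = n.-1 + ((N - 2) * n + n.-1))%N by nia.
  rewrite flatten_sturm_factor_blocks !sturm_factor_cat.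
  by congr (W _ _ ++ W _ _ ++ W _ _); nia.
split.
  move=> u /mapP [j]; rewrite mem_iota => /andP [j_ge1 j_lt] ->.
  rewrite /parikh block_count; last lia.
  have := count_negb_id (W (j * n) n); rewrite size_sturm_factor block_count; last lia.
  by move=> sum_n; congr pair; lia.
split.
  have := count_sturm_factor 1 n.-1; have := mech_floor_step 0.
  have -> : (1 + n.-1 = 1 * n)%N by lia.
  rewrite F0 F_blocks; last lia.
  by move=> step cnt; apply: parikh_contained_trimmed_block; rewrite ?size_sturm_factor //; lia.
split.
  have := count_sturm_factor ((N - 1) * n) n.-1; have := mech_floor_step ((N - 1) * n + n.-1).
  have -> : (((N - 1) * n + n.-1).+1 = N * n)%N by nia.
  rewrite !F_blocks; [|lia | lia].
  by move=> step cnt; apply: parikh_contained_trimmed_block; rewrite ?size_sturm_factor //; nia.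
by rewrite /= subnK.
Qed.

End Mechanical.

Lemma exists_phase (alpha : R) (n P N : nat) :
  INR N * Rabs (INR n * alpha - INR P) < 1 ->
  exists rho, 0 <= rho < 1 /\
    forall j, (j <= N)%N -> mech_floor rho alpha (j * n) = Z.of_nat (j * P).
Proof.
set delta := INR n * alpha - INR P => N_delta.
exists (if Rle_dec 0 delta then 0 else - INR N * delta).
set rho := if _ then _ else _.
have frac_j j : (j <= N)%N -> 0 <= rho + INR j * delta < 1.
  move=> /INR_leq j_le; have := pos_INR j; rewrite /rho.
  case: Rle_dec => /= delta_sgn j_ge0.
    rewrite Rabs_pos_eq // in N_delta.
    by have := Rmult_le_compat_r _ _ _ delta_sgn j_le; have := Rmult_le_pos _ _ j_ge0 delta_sgn; lra.
  rewrite Rabs_left in N_delta; last lra.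
  have neg_delta : 0 <= - delta by lra.
  by have := Rmult_le_compat_r _ _ _ neg_delta j_le; have := Rmult_le_pos _ _ j_ge0 neg_delta; lra.
split; first by have := frac_j 0%N (leq0n N); rewrite Rmult_0_l Rplus_0_r.
move=> j /frac_j j_frac; symmetry; apply: Int_part_spec.
have -> : rho + INR (j * n) * alpha = INR (j * P) + (rho + INR j * delta).
  by rewrite /delta !INR_muln; ring.
rewrite -INR_IZR_INZ; lra.
Qed.

Theorem proposition5p5 (alpha : R) :
  Rlt 0 alpha -> Rlt alpha (Rdiv 1 2) -> irrational alpha ->
  forall k : nat,
    exists w : seq bool,
      factor_of_slope alpha w /\ min_abelian_period w (cf_q alpha k).
Proof.
move=> alpha_gt0 alpha_lt_half alpha_irr.
have alpha_ge0 : 0 <= alpha by lra.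
have alpha_lt1 : alpha < 1 by lra.
case=> [|k].
  exists (sturm_factor 0 alpha 0 1); split; first by apply: factor_of_slope_sturm_factor; lra.
  exact: min_abelian_period_singleton.
have [rho [rho01 F_blocks]] := exists_phase (cf_approx_lt1 alpha_gt0 alpha_lt_half alpha_irr k.+1).
set n := cf_q alpha k.+1 in F_blocks *; set N := cf_q alpha k.+2 in F_blocks.
have n_gt0 : (0 < n)%N by exact: cf_q_gt0.
have N_ge3 : (3 <= N)%N by exact: cf_q_ge3.
exists (sturm_factor rho alpha 1 (N * n - 2)).
split; first exact: factor_of_slope_sturm_factor.
split; first exact: abelian_period_uniform_blocks F_blocks.
move=> m /[dup] /abelian_period_gt0 m_gt0.
move=> /(abelian_period_sturm_factor alpha_ge0 alpha_lt1) [d approx].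
rewrite leqNgt; apply/negP => m_lt_n.
have := cf_best_approx alpha_gt0 alpha_lt_half alpha_irr d (ltac:(lia) : (0 < m < n)%N).
rewrite -/n -/N (_ : (N * n - 2 + 2 = N * n)%N) ?INR_muln in approx *; [lra | nia].
Qed.
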